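(* Let $t\ge 2$. Every $\mathbb{F}_q$-linear set of pseudoregulus type of the projective line $\Lambda=PG(1,q^t)$ is mapped by some element of $PGL(2,q^t)$ onto the linear set $\{\langle(x,x^q)\rangle_{q^t}:x\in\mathbb{F}_{q^t}^*\}=\{\langle(1,a)\rangle_{q^t}: a\in\mathbb{F}_{q^t}^*,\ N_{q^t/q}(a)=1\}$. In particular all $\mathbb{F}_q$-linear sets of pseudoregulus type of $PG(1,q^t)$ are projectively equivalent.
   Context: Let $\Lambda=PG(V,\mathbb{F}_{q^t})=PG(1,q^t)$ with $V$ a 2-dimensional $\mathbb{F}_{q^t}$-space; $\langle\mathbf u\rangle_{q^t}$ denotes the point defined by $\mathbf u\ne\mathbf 0$. Definition: given two distinct points $P_1=\langle\mathbf w\rangle_{q^t}$, $P_2=\langle\mathbf v\rangle_{q^t}$ of $\Lambda$, an automorphism $\tau$ of $\mathbb{F}_{q^t}$ with $\mathrm{Fix}(\tau)=\mathbb{F}_q$, and $\rho\in\mathbb{F}_{q^t}^*$, the set $L_{\rho,\tau}=\{\langle\lambda\mathbf w+\rho\lambda^\tau\mathbf v\rangle_{q^t}:\lambda\in\mathbb{F}_{q^t}^*\}$ is called an $\mathbb{F}_q$-linear set of pseudoregulus type of $\Lambda$, with transversal points $P_1,P_2$. $N_{q^t/q}$ denotes the norm from $\mathbb{F}_{q^t}$ to $\mathbb{F}_q$, and coordinates are with respect to a fixed basis of $V$. *)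

From HB Require Import structures.
From mathcomp Require Import all_boot all_order all_algebra all_field.
Set Implicit Arguments. Unset Strict Implicit. Unset Printing Implicit Defensive.
Import GRing.Theory.
Local Open Scope ring_scope.

Section PG1.
Variable L : finFieldType.

Definition vec2 (a b : L) : 'cV[L]_2 := \col_(i < 2) (if i == 0 :> nat then a else b).

Definition same_point (u u' : 'cV[L]_2) : Prop :=
  u != 0 /\ exists c : L, c != 0 /\ u' = c *: u.

(* A set of points of PG(1,L) is described by a set of nonzero representative
   vectors; two descriptions give the same point set. *)
Definition same_points (A B : 'cV[L]_2 -> Prop) : Prop :=
  (forall u, A u -> exists u', B u' /\ same_point u u') /\
  (forall u', B u' -> exists u, A u /\ same_point u u').

Definition mapv (M : 'M[L]_2) (A : 'cV[L]_2 -> Prop) : 'cV[L]_2 -> Prop :=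
  fun u => exists x, A x /\ u = M *m x.

Definition normq (q t : nat) (a : L) : L := \prod_(i < t) a ^+ (q ^ i).

(* Data of an F_q-linear set of pseudoregulus type: distinct points <w>, <v>,
   rho nonzero, tau a field automorphism with Fix(tau) = F_q = {x | x^q = x}. *)
Definition pr_data (q : nat) (w v : 'cV[L]_2) (rho : L) (tau : {rmorphism L -> L})
  : Prop :=
  [/\ w != 0, v != 0, ~ same_point w v, rho != 0 &
     bijective tau /\ (forall x : L, tau x = x <-> x ^+ q = x)].

Definition linset (w v : 'cV[L]_2) (rho : L) (tau : {rmorphism L -> L})
  : 'cV[L]_2 -> Prop :=
  fun u => exists lam : L, lam != 0 /\ u = lam *: w + (rho * tau lam) *: v.

Definition std_set (q : nat) : 'cV[L]_2 -> Prop :=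
  fun u => exists x : L, x != 0 /\ u = vec2 x (x ^+ q).

Definition std_set_norm (q t : nat) : 'cV[L]_2 -> Prop :=
  fun u => exists a : L, a != 0 /\ normq q t a = 1 /\ u = vec2 1 a.

End PG1.

From Pilot Require Import Defs.
From HB Require Import structures.
From mathcomp Require Import all_boot all_order all_algebra all_field.
From mathcomp Require Import ring.
Set Implicit Arguments. Unset Strict Implicit. Unset Printing Implicit Defensive.
Import GRing.Theory.
Local Open Scope ring_scope.

(* If <w>, <v> are distinct points and rho != 0, the matrix
   P = [w | rho v] is invertible and maps the "graph" {<(x, tau x)> : x != 0}
   onto the linear set L_{rho,tau}.  The point <(x, phi x)> = <(1, phi x / x)>
   only depends on the ratio phi x / x, so two graphs define the same point set
   as soon as their ratio maps x |-> phi x / x have the same image in L^*.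
   For every multiplicative map phi of L fixing exactly F_q (any automorphism
   tau with Fix(tau) = F_q, and the Frobenius x |-> x^q) this image is the group
   of elements of norm N(a) = a^(1 + q + ... + q^(t-1)) equal to 1 (Hilbert 90):
   the ratio map lands in that group, which has at most (q^t-1)/(q-1) elements,
   and its fibres are cosets of F_q^*, so its image is at least that large. *)

Section ProjectiveLine.
Variable L : finFieldType.
Implicit Types (u : 'cV[L]_2) (A B C : 'cV[L]_2 -> Prop) (M N : 'M[L]_2).

Lemma vec2_eta u : u = vec2 (u 0 0) (u 1 0).
Proof.
apply/matrixP => i j; rewrite !mxE (ord1 j).
by case: i => [[|[|i]] hi] //=; congr (u _ _); apply: val_inj.
Qed.

Lemma vec2_0 : vec2 0 0 = 0 :> 'cV[L]_2.
Proof. by apply/matrixP => i j; rewrite !mxE; case: ifP. Qed.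

Lemma same_point_vec2 (a b x y : L) : a != 0 -> x != 0 -> b / a = y / x ->
  same_point (vec2 a b) (vec2 x y).
Proof.
move=> a0 x0 slope; split.
  by apply: contra a0 => /eqP/matrixP/(_ 0 0); rewrite !mxE /= => ->.
exists (x / a); split; first by rewrite mulf_neq0 ?invr_eq0.
have -> : y = b / a * x by rewrite slope divfK.
by apply/matrixP => i j; rewrite !mxE; case: ifP => _; field.
Qed.

Lemma same_point_sym (x y : 'cV[L]_2) : same_point x y -> same_point y x.
Proof.
move=> [x0 [c [c0 ->]]]; split; first by rewrite scaler_eq0 negb_or c0.
by exists c^-1; split; rewrite ?invr_eq0 ?scalerK.
Qed.

Lemma same_point_trans (x y z : 'cV[L]_2) :
  same_point x y -> same_point y z -> same_point x z.
Proof.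
move=> [x0 [c [c0 ->]]] [_ [c' [c'0 ->]]]; split=> //.
by exists (c' * c); rewrite mulf_neq0 ?scalerA.
Qed.

Lemma same_points_sym A B : same_points A B -> same_points B A.
Proof.
move=> [AB BA]; split=> [u /BA | u /AB] [u' [Au' /same_point_sym]];
by exists u'.
Qed.

Lemma same_points_trans A B C :
  same_points A B -> same_points B C -> same_points A C.
Proof.
move=> [AB BA] [BC CB]; split=> [u /AB [u' [/BC [u'' [Cu'' p']] p]] |
                               u /CB [u' [/BA [u'' [Au'' p']] p]]].
  by exists u''; split=> //; apply: same_point_trans p p'.
by exists u''; split=> //; apply: same_point_trans p' p.
Qed.

Lemma same_points_ext A A' B B' : (forall u, A u <-> A' u) ->
  (forall u, B u <-> B' u) -> same_points A B -> same_points A' B'.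
Proof.
move=> eA eB [AB BA]; split=> [u /eA/AB [u' [/eB Bu' p]] | u /eB/BA [u' [/eA Au' p]]];
by exists u'.
Qed.

Lemma same_point_mapv M (x y : 'cV[L]_2) : M \in unitmx ->
  same_point x y -> same_point (M *m x) (M *m y).
Proof.
move=> uM [x0 [c [c0 ->]]]; split; last by exists c; rewrite scalemxAr.
by apply: contra x0 => /eqP Mx0; rewrite -(mulKmx uM x) Mx0 mulmx0.
Qed.

Lemma same_points_mapv M A B : M \in unitmx ->
  same_points A B -> same_points (mapv M A) (mapv M B).
Proof.
move=> uM [AB BA]; split=> [_ [x [/AB [y [By p]] ->]] | _ [y [/BA [x [Ax p]] ->]]].
  by exists (M *m y); split; [exists y | apply: same_point_mapv].
by exists (M *m x); split; [exists x | apply: same_point_mapv].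
Qed.

Lemma mapv_mul M N A u : mapv N (mapv M A) u <-> mapv (N *m M) A u.
Proof.
split=> [[_ [[x [Ax ->]] ->]] | [x [Ax ->]]]; first by exists x; rewrite mulmxA.
by exists (M *m x); split; [exists x | rewrite mulmxA].
Qed.

Lemma mapv_inv M A u : M \in unitmx -> mapv (invmx M) (mapv M A) u <-> A u.
Proof.
move=> uM; rewrite mapv_mul mulVmx //.
by split=> [[x [Ax ->]] | Au]; [rewrite mul1mx | exists u; rewrite mul1mx].
Qed.

Definition proj_equiv A B : Prop :=
  exists M, M \in unitmx /\ same_points (mapv M A) B.

Lemma proj_equiv_via A B C :
  proj_equiv A C -> proj_equiv B C -> proj_equiv A B.
Proof.
move=> [M1 [uM1 AC]] [M2 [uM2 BC]].
exists (invmx M2 *m M1); split; first by rewrite unitmx_mul unitmx_inv uM2.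
apply: (@same_points_ext (mapv (invmx M2) (mapv M1 A)) _
                         (mapv (invmx M2) (mapv M2 B))).
- by move=> u; rewrite mapv_mul.
- by move=> u; rewrite mapv_inv.
apply: same_points_mapv; first by rewrite unitmx_inv.
exact: same_points_trans AC (same_points_sym BC).
Qed.

Definition col2 (w v : 'cV[L]_2) : 'M[L]_2 :=
  \matrix_(i, j) (if j == 0 :> nat then w i 0 else v i 0).

Lemma col2_mul (w v : 'cV[L]_2) (a b : L) :
  col2 w v *m vec2 a b = a *: w + b *: v.
Proof.
apply/matrixP => i j; rewrite !mxE !big_ord_recl big_ord0 !mxE (ord1 j) /=.
by rewrite addr0 mulrC [v i 0 * _]mulrC.
Qed.

Lemma distinct_points_indep (w v : 'cV[L]_2) (a b : L) : w != 0 -> v != 0 ->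
  ~ same_point w v -> a *: w + b *: v = 0 -> a = 0 /\ b = 0.
Proof.
move=> w0 v0 nsp e.
have [b0 | b0] := eqVneq b 0.
  move: e; rewrite b0 scale0r addr0 => /eqP; rewrite scaler_eq0 (negbTE w0).
  by rewrite orbF => /eqP.
have [a0 | a0] := eqVneq a 0.
  by move: e; rewrite a0 scale0r add0r => /eqP; rewrite scaler_eq0 (negbTE b0) (negbTE v0).
have bv : b *: v = - (a *: w) by apply/eqP; rewrite -addr_eq0 addrC e.
case: nsp; split=> //; exists (- a / b); split.
  by rewrite mulf_neq0 ?oppr_eq0 ?invr_eq0.
by rewrite -[v](scalerK b0) bv scalerN scalerA -scaleNr; congr (_ *: _); ring.
Qed.

Lemma col2_unit (w v : 'cV[L]_2) :
  (forall a b : L, a *: w + b *: v = 0 -> a = 0 /\ b = 0) -> col2 w v \in unitmx.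
Proof.
move=> indep; rewrite unitmxE unitfE -det_tr; apply/det0P => [[r r0]].
move/(congr1 trmx); rewrite trmx_mul trmxK trmx0 (vec2_eta r^T) col2_mul.
move/indep=> [r1 r2]; move: r0.
by rewrite -trmx_eq0 (vec2_eta r^T) r1 r2 vec2_0 eqxx.
Qed.

Definition graph (phi : L -> L) : 'cV[L]_2 -> Prop :=
  fun u => exists x : L, x != 0 /\ u = vec2 x (phi x).

(* The ratio phi x / x determines the point <(x, phi x)> = <(1, phi x / x)>. *)
Definition ratio (phi : L -> L) (x : L) : L := phi x / x.

Lemma graph_same_points (phi1 phi2 : L -> L) :
  (forall a, (exists x, x != 0 /\ ratio phi1 x = a) <->
             (exists x, x != 0 /\ ratio phi2 x = a)) ->
  same_points (graph phi1) (graph phi2).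
Proof.
move=> img; split=> [_ [x [x0 ->]] | _ [y [y0 ->]]].
  have [y [y0 e]] := (img (ratio phi1 x)).1 (ex_intro _ x (conj x0 erefl)).
  by exists (vec2 y (phi2 y)); split; [exists y | apply: same_point_vec2].
have [x [x0 e]] := (img (ratio phi2 y)).2 (ex_intro _ y (conj y0 erefl)).
by exists (vec2 x (phi1 x)); split; [exists x | apply: same_point_vec2].
Qed.

Lemma linset_to_graph (w v : 'cV[L]_2) (rho : L) (tau : {rmorphism L -> L}) :
  w != 0 -> v != 0 -> ~ same_point w v -> rho != 0 ->
  exists M, M \in unitmx /\
    forall u, mapv M (linset w v rho tau) u <-> graph tau u.
Proof.
move=> w0 v0 nsp rho0; set P := col2 w (rho *: v).
have uP : P \in unitmx.
  apply: col2_unit => a b; rewrite scalerA => /(distinct_points_indep w0 v0 nsp).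
  by case=> -> /eqP; rewrite mulf_eq0 (negbTE rho0) orbF => /eqP.
exists (invmx P); split=> [|u]; first by rewrite unitmx_inv.
rewrite -(mapv_inv (graph tau) u uP).
have lin_graph x : linset w v rho tau x <-> mapv P (graph tau) x.
  rewrite /P; split=> [[l [l0 ->]] | [_ [[l [l0 ->]] ->]]].
    by exists (vec2 l (tau l)); rewrite col2_mul scalerA mulrC; split=> //; exists l.
  by exists l; rewrite col2_mul scalerA mulrC.
split=> [[x [/lin_graph Lx ->]] | [x [Gx ->]]]; first by exists x.
by exists x; split=> //; apply/lin_graph.
Qed.

Lemma expf_card_pred (y : L) : y != 0 -> y ^+ #|L|.-1 = 1.
Proof.
move=> y0; apply: (mulfI y0); rewrite mulr1 -exprS prednK ?expf_card //.
by apply/card_gt0P; exists 0.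
Qed.

Lemma card_unity_roots (n : nat) : (0 < n)%N -> (#|[set a : L | a ^+ n == 1%R]| <= n)%N.
Proof.
move=> n0; rewrite cardE; apply: max_unity_roots n0 _ (enum_uniq _).
by apply/allP => a; rewrite mem_enum inE unity_rootE.
Qed.

End ProjectiveLine.

Lemma card_fibers_le (T U : finType) (g : T -> U) (A : {set T}) (k : nat) :
  (forall y, y \in A -> #|[set y' in A | g y' == g y]| <= k)%N ->
  (#|A| <= #|g @: A| * k)%N.
Proof.
move=> fib; rewrite -sum1_card (partition_big_imset g) -sum_nat_const.
apply: leq_sum => _ /imsetP [y yA ->].
by rewrite sum1dep_card; apply: fib.
Qed.

Section RatioImage.
Variables (L : finFieldType) (q t : nat).
Hypothesis hcard : #|L| = (q ^ t)%N.

(* The exponent of the norm: N(a) = a ^+ (1 + q + ... + q^(t-1)). *)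
Local Notation d := (\sum_(i < t) q ^ i)%N.

Lemma card_units_Fqt : #|[set~ (0 : L)]| = (q.-1 * d)%N.
Proof. by rewrite cardsC1 hcard predn_exp. Qed.

Lemma card_units_gt0 : (0 < q.-1 * d)%N.
Proof. by rewrite -card_units_Fqt; apply/card_gt0P; exists 1; rewrite !inE oner_eq0. Qed.

Lemma q_gt1 : (1 < q)%N.
Proof. by have := card_units_gt0; rewrite muln_gt0 => /andP [+ _]; case: q. Qed.

Lemma norm_exp_Fq (y : L) : y != 0 -> (y ^+ d) ^+ q = y ^+ d.
Proof.
move=> y0; have qS : q = q.-1.+1 by rewrite prednK // ltnW // q_gt1.
have unit_pow : (y ^+ d) ^+ q.-1 = 1.
  by rewrite -exprM mulnC -predn_exp -hcard expf_card_pred.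
by rewrite [X in _ ^+ X = _]qS exprS unit_pow mulr1.
Qed.

(* The nonzero elements of F_q are (q - 1)-th roots of unity, so there are at
   most q - 1 of them. *)
Lemma card_fixed_units :
  (#|[set x : L | (x != 0%R) && (x ^+ q == x)]| <= q.-1)%N.
Proof.
have q1 : (0 < q.-1)%N by rewrite -subn1 subn_gt0 q_gt1.
apply: leq_trans _ (card_unity_roots L q1); apply: subset_leq_card.
apply/subsetP => x; rewrite !inE => /andP [x0 /eqP xq].
by apply/eqP; apply: (mulfI x0); rewrite -exprS prednK ?xq ?mulr1 // ltnW ?q_gt1.
Qed.

(* Multiplicative maps of L whose fixed points are exactly F_q: both the
   automorphisms tau with Fix(tau) = F_q and the Frobenius x |-> x^q. *)
Definition mult_fixing_Fq (phi : L -> L) : Prop :=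
  {morph phi : x y / x * y} /\ (forall x, phi x = x <-> x ^+ q = x).

Lemma rmorph_mult_fixing_Fq (tau : {rmorphism L -> L}) :
  (forall x, tau x = x <-> x ^+ q = x) -> mult_fixing_Fq tau.
Proof. by split=> // x y; rewrite rmorphM. Qed.

Lemma frobenius_mult_fixing_Fq : mult_fixing_Fq (fun x => x ^+ q).
Proof. by split=> // x y; rewrite exprMn. Qed.

Section MultFixing.
Variable phi : L -> L.
Hypothesis hphi : mult_fixing_Fq phi.

Lemma mult_fixing1 : phi 1 = 1.
Proof. by apply/hphi.2; rewrite expr1n. Qed.

Lemma mult_fixingX (y : L) (n : nat) : phi (y ^+ n) = phi y ^+ n.
Proof. by elim: n => [|n IH]; rewrite ?mult_fixing1 // !exprS hphi.1 IH. Qed.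

Lemma mult_fixing_neq0 (y : L) : y != 0 -> phi y != 0.
Proof.
move=> y0; apply/eqP => phiy0; have := hphi.1 y y^-1.
by rewrite mulfV // mult_fixing1 phiy0 mul0r => /eqP; rewrite oner_eq0.
Qed.

Lemma ratio_norm1 (y : L) : y != 0 -> ratio phi y ^+ d = 1.
Proof.
move=> y0; rewrite /ratio exprMn exprVn -mult_fixingX.
by rewrite (hphi.2 _).2 ?norm_exp_Fq // divff // expf_neq0.
Qed.

Lemma ratio_fiber (y y' : L) : y != 0 -> y' != 0 ->
  ratio phi y = ratio phi y' -> (y / y') ^+ q = y / y'.
Proof.
move=> y0 y'0 e; apply/hphi.2; apply: (mulIf (mult_fixing_neq0 y'0)).
rewrite -hphi.1 divfK //.
have -> : phi y = ratio phi y' * y by rewrite -e /ratio divfK.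
by rewrite /ratio; field.
Qed.

(* Each fibre of the ratio map is a coset of F_q^*, hence the image has at
   least (q^t - 1)/(q - 1) = d elements. *)
Lemma ratio_image_card : (d <= #|ratio phi @: [set~ (0%R : L)]|)%N.
Proof.
set K := [set x : L | (x != 0%R) && (x ^+ q == x)].
have fib y : y \in [set~ 0] ->
    (#|[set y' in [set~ 0%R] | ratio phi y' == ratio phi y]| <= q.-1)%N.
  rewrite in_setC1 => y0; apply: leq_trans _ card_fixed_units.
  apply: leq_trans _ (leq_imset_card (fun k => k * y) K); apply: subset_leq_card.
  apply/subsetP => y'; rewrite !inE => /andP [y'0 /eqP e].
  apply/imsetP; exists (y' / y); last by rewrite divfK.
  by rewrite inE mulf_neq0 ?invr_eq0 //= ratio_fiber.
have := card_fibers_le fib; rewrite card_units_Fqt [(_ * q.-1)%N]mulnC leq_pmul2l //.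
by have := card_units_gt0; rewrite muln_gt0 => /andP [].
Qed.

(* Hilbert 90: the ratios phi y / y are exactly the elements of norm 1. *)
Lemma ratio_image (a : L) : (exists y, y != 0 /\ ratio phi y = a) <-> a ^+ d = 1.
Proof.
have d0 : (0 < d)%N by have := card_units_gt0; rewrite muln_gt0 => /andP [].
have img : ratio phi @: [set~ 0] = [set a : L | a ^+ d == 1].
  apply/eqP; rewrite eqEcard (leq_trans (card_unity_roots L d0) ratio_image_card).
  rewrite andbT; apply/subsetP => _ /imsetP [y y0 ->].
  by rewrite inE ratio_norm1 // -in_setC1.
split=> [[y [y0 <-]] | ad]; first exact: ratio_norm1.
have : a \in ratio phi @: [set~ 0] by rewrite img inE ad.
by case/imsetP => y; rewrite in_setC1 => y0 ->; exists y.
Qed.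

End MultFixing.

Lemma graph_same_points_Fq (phi1 phi2 : L -> L) :
  mult_fixing_Fq phi1 -> mult_fixing_Fq phi2 ->
  same_points (graph phi1) (graph phi2).
Proof.
move=> h1 h2; apply: graph_same_points => a.
by split=> [/(ratio_image h1 a) /(ratio_image h2 a) | /(ratio_image h2 a) /(ratio_image h1 a)].
Qed.

Lemma std_set_norm_points : same_points (@std_set L q) (@std_set_norm L q t).
Proof.
have frob := ratio_image frobenius_mult_fixing_Fq.
split=> [_ [x [x0 ->]] | _ [a [a0 [na ->]]]].
  have nx := ratio_norm1 frobenius_mult_fixing_Fq x0.
  exists (vec2 1 (x ^+ q / x)); split.
    exists (x ^+ q / x); split; first by rewrite mulf_neq0 ?expf_neq0 ?invr_eq0.
    by split=> //; rewrite /Defs.normq prodrXr.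
  by apply: same_point_vec2; rewrite ?oner_eq0 ?divr1.
have [x [x0 e]] : exists x, x != 0 /\ ratio (fun x => x ^+ q) x = a.
  by apply/frob; rewrite -na /Defs.normq prodrXr.
exists (vec2 x (x ^+ q)); split; first by exists x.
by apply: same_point_vec2; rewrite ?oner_eq0 ?divr1.
Qed.

End RatioImage.

Theorem mainTheorem10 (L : finFieldType) (q t : nat)
  (ht : (2 <= t)%N) (hcard : #|L| = (q ^ t)%N) :
  (forall (w v : 'cV[L]_2) (rho : L) (tau : {rmorphism L -> L}),
     pr_data q w v rho tau ->
     exists M : 'M[L]_2, M \in unitmx /\
       same_points (mapv M (linset w v rho tau)) (@std_set L q))
  /\ same_points (@std_set L q) (@std_set_norm L q t)
  /\ (forall (w1 v1 : 'cV[L]_2) (rho1 : L) (tau1 : {rmorphism L -> L})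
             (w2 v2 : 'cV[L]_2) (rho2 : L) (tau2 : {rmorphism L -> L}),
        pr_data q w1 v1 rho1 tau1 -> pr_data q w2 v2 rho2 tau2 ->
        exists M : 'M[L]_2, M \in unitmx /\
          same_points (mapv M (linset w1 v1 rho1 tau1)) (linset w2 v2 rho2 tau2)).
Proof.
have to_std w v rho tau : pr_data q w v rho tau ->
    proj_equiv (linset w v rho tau) (@std_set L q).
  case=> w0 v0 nsp rho0 [_ fixF].
  have [M [uM hM]] := linset_to_graph tau w0 v0 nsp rho0.
  exists M; split=> //.
  apply: (same_points_ext (fun u => iff_sym (hM u)) (fun u => iff_refl _)).
  exact (graph_same_points_Fq hcard (rmorph_mult_fixing_Fq fixF)
                              (@frobenius_mult_fixing_Fq L q)).
split; first exact: to_std.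
split; first exact: std_set_norm_points hcard.
move=> w1 v1 rho1 tau1 w2 v2 rho2 tau2 h1 h2.
exact (proj_equiv_via (to_std _ _ _ _ h1) (to_std _ _ _ _ h2)).
Qed.
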